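(* Consider an $N$-agent Markov decision process with finite state space $\mathcal{S}$, finite individual action spaces $\mathcal{A}^i$, joint action space $\mathcal{A}=\prod_{i=1}^N\mathcal{A}^i$, bounded individual rewards and discount factor $\gamma\in(0,1)$. Let $\pi^{ii}_{old},\pi^{ii}_{new}$ ($i=1,\dots,N$) be individual policies, $\boldsymbol{\pi}_{old}(\boldsymbol{a}|s)=\prod_i\pi^{ii}_{old}(a^i|s)$ and $\boldsymbol{\pi}_{new}(\boldsymbol{a}|s)=\prod_i\pi^{ii}_{new}(a^i|s)$, and let $\boldsymbol{\tilde{\Pi}}_{new}=(\boldsymbol{\tilde{\pi}}^1_{new},\dots,\boldsymbol{\tilde{\pi}}^N_{new})$ with $\boldsymbol{\tilde{\pi}}^i_{new}(\boldsymbol{a}|s)=\prod_{j}\pi^{ij}_{new}(a^j|s)$, where for $j\neq i$ the $\pi^{ij}_{new}$ are arbitrary policies for agent $j$. Then $$\eta(\boldsymbol{\pi}_{new}) \geq \eta(\boldsymbol{\pi}_{old}) + \zeta_{\boldsymbol{\pi}_{old}}(\boldsymbol{\tilde{\Pi}}_{new}) - C \sum_{i=1}^N D_{KL}^{max}(\pi^{ii}_{old} \,\|\, \pi^{ii}_{new}) - f^{\boldsymbol{\pi}_{old}} - \sum_{i=1}^N \frac{1}{2} \max_{s, \boldsymbol{a}} \big| A_i^{\boldsymbol{\pi}_{old}}(s, \boldsymbol{a}) \big| \cdot \sum_{s, \boldsymbol{a}}\big(\boldsymbol{\tilde{\pi}}^i_{new}(\boldsymbol{a}|s) - \boldsymbol{\pi}_{new}(\boldsymbol{a}|s)\big)^2,$$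 where $C = \frac{4\gamma \max_{s, \boldsymbol{a}}|\sum_{i} A_i^{\boldsymbol{\pi}_{old}}(s, \boldsymbol{a})|}{(1-\gamma)^2}$, $D_{KL}^{max}(\pi^{ii}_{old}\|\pi^{ii}_{new})=\max_s D_{KL}(\pi^{ii}_{old}(\cdot|s)\|\pi^{ii}_{new}(\cdot|s))$, and $f^{\boldsymbol{\pi}_{old}} = \sum_{i} \frac{1}{2} \max_{s, \boldsymbol{a}} | A_i^{\boldsymbol{\pi}_{old}}(s, \boldsymbol{a}) | \cdot |\mathcal{A}| \cdot \sum_s (d^{\boldsymbol{\pi}_{old}}(s))^2$.
   Context: Trajectories under a joint policy $\boldsymbol{\pi}$ are generated by $s_0\sim d(s_0)$, $\boldsymbol{a}_t\sim\boldsymbol{\pi}(\cdot|s_t)$, $s_{t+1}\sim\mathcal{P}(\cdot|s_t,\boldsymbol{a}_t)$, rewards $r_t^i=\mathcal{R}^i(s_t,\boldsymbol{a}_t)$. The collective objective is $\eta(\boldsymbol{\pi})=\sum_{i=1}^N\mathbb{E}_{\tau\sim\boldsymbol{\pi}}[\sum_{t\ge0}\gamma^tr^i_t]$. Individual value functions $V_i^{\boldsymbol{\pi}}(s)=\mathbb{E}[\sum_{t\ge0}\gamma^t r^i_t\mid s_0=s]$, $Q_i^{\boldsymbol{\pi}}(s,\boldsymbol{a})=\mathbb{E}[\sum_{t\ge0}\gamma^t r^i_t\mid s_0=s,\boldsymbol{a}_0=\boldsymbol{a}]$, advantage $A_i^{\boldsymbol{\pi}}=Q_i^{\boldsymbol{\pi}}-V_i^{\boldsymbol{\pi}}$.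 State visitation distribution $d^{\boldsymbol{\pi}}(s)=\sum_{t\ge0}\gamma^tP(s_t=s\mid\boldsymbol{\pi})$. For a collection of suggesting joint policies $\boldsymbol{\tilde{\Pi}}=(\boldsymbol{\tilde{\pi}}^1,\dots,\boldsymbol{\tilde{\pi}}^N)$, $\zeta_{\boldsymbol{\pi}'}(\boldsymbol{\tilde{\Pi}})=\sum_{i}\sum_s d^{\boldsymbol{\pi}'}(s)\sum_{\boldsymbol{a}}\boldsymbol{\tilde{\pi}}^i(\boldsymbol{a}|s)A_i^{\boldsymbol{\pi}'}(s,\boldsymbol{a})$. *)

From HB Require Import structures.
From mathcomp Require Import all_boot all_order all_algebra.
From mathcomp Require Import all_classical all_reals all_analysis.
Set Implicit Arguments. Unset Strict Implicit. Unset Printing Implicit Defensive.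
Import Order.TTheory GRing.Theory Num.Theory.
Local Open Scope ring_scope.

Definition infsum {R : realType} (u : nat -> R) : R :=
  limn (fun n => \sum_(0 <= t < n) u t).

Section MAMDP.
Context {R : realType} {N : nat} {S : finType} {Act : 'I_N -> finType}.

Definition jact := {dffun forall i : 'I_N, Act i}.

Definition is_dist (T : finType) (p : T -> R) :=
  (forall x, 0 <= p x) /\ \sum_x p x = 1.

Definition prod_pol (p : forall j : 'I_N, S -> Act j -> R) : S -> jact -> R :=
  fun s a => \prod_(j < N) p j s (a j).

Variables (P : S -> jact -> S -> R) (Rw : 'I_N -> S -> jact -> R) (gamma : R).

Fixpoint stdist (pi : S -> jact -> R) (mu : S -> R) (t : nat) : S -> R :=
  match t with
  | 0 => mu
  | t'.+1 => fun s' => \sum_s stdist pi mu t' s * (\sum_a pi s a * P s a s')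
  end.

Definition exp_rew (pi : S -> jact -> R) (i : 'I_N) (mu : S -> R) : R :=
  \sum_s mu s * \sum_a pi s a * Rw i s a.

Definition delta (s : S) : S -> R := fun s' => if s' == s then 1 else 0.

Definition Vfun (pi : S -> jact -> R) (i : 'I_N) (s : S) : R :=
  infsum (fun t => gamma ^+ t * exp_rew pi i (stdist pi (delta s) t)).

(* Q_i^pi(s,a) = E[ sum_t gamma^t r_t^i | s_0 = s, a_0 = a ] :
   r_0 = R^i(s,a), and s_1 ~ P(.|s,a), later actions from pi *)
Definition Qterm (pi : S -> jact -> R) (i : 'I_N) (s : S) (a : jact) (t : nat) : R :=
  match t with
  | 0 => Rw i s a
  | t'.+1 => exp_rew pi i (stdist pi (P s a) t')
  end.

Definition Qfun (pi : S -> jact -> R) (i : 'I_N) (s : S) (a : jact) : R :=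
  infsum (fun t => gamma ^+ t * Qterm pi i s a t).

Definition Afun (pi : S -> jact -> R) (i : 'I_N) (s : S) (a : jact) : R :=
  Qfun pi i s a - Vfun pi i s.

Variable d0 : S -> R.

Definition eta_tot (pi : S -> jact -> R) : R :=
  \sum_(i < N) infsum (fun t => gamma ^+ t * exp_rew pi i (stdist pi d0 t)).

Definition dvis (pi : S -> jact -> R) (s : S) : R :=
  infsum (fun t => gamma ^+ t * stdist pi d0 t s).

Definition zeta_tot (pi' : S -> jact -> R) (Pit : 'I_N -> S -> jact -> R) : R :=
  \sum_(i < N) \sum_s dvis pi' s * \sum_a Pit i s a * Afun pi' i s a.

(* max over (s,a) of a nonnegative quantity *)
Definition maxSA (f : S -> jact -> R) : R :=
  \big[Num.max/0]_(p : S * jact) f p.1 p.2.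

End MAMDP.

(* KL divergence D_KL(p || q) = sum_{x : p x <> 0} p x ln (p x / q x)
   (only used under absolute continuity q x = 0 -> p x = 0) *)
Definition KL {R : realType} (T : finType) (p q : T -> R) : R :=
  \sum_(x | p x != 0) p x * ln (p x / q x).

Definition KLmax {R : realType} (S T : finType) (p q : S -> T -> R) : R :=
  \big[Num.max/0]_s KL (p s) (q s).

(* The performance-difference identity writes eta(pi_new) - eta(pi_old) as
   sum_s d^{pi_new}(s) sum_i sum_a pi_new(a|s) A_i(s,a), with A_i the
   advantages of pi_old.  Replacing d^{pi_new} by d^{pi_old} costs at most
   gamma eps B^2 / (1 - gamma)^2, where eps = max_{s,a} |sum_i A_i(s,a)| and B
   bounds the l1 distance between pi_new(.|s) and pi_old(.|s): as in TRPO, the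
   advantages average to zero under pi_old, so the inner sum is at most eps B,
   and the two visitation measures are gamma B / (1 - gamma)^2 apart in l1.
   The KL divergence of product policies is the sum of the individual
   divergences, and (sum |p - q|)^2 <= 4 KL(p || q) through the Bhattacharyya
   coefficient, so B^2 <= 4 sum_i D_KL^max.  Finally, replacing pi_new by the
   suggested policy of agent i in its own term costs, by AM-GM, at most
   max|A_i| / 2 * sum_{s,a} (d^{pi_old}(s)^2 + (pi~^i - pi_new)^2). *)

From HB Require Import structures.
From mathcomp Require Import all_boot all_order all_algebra.
From mathcomp Require Import all_classical all_reals all_analysis.
From mathcomp Require Import ring lra.
Import Order.TTheory GRing.Theory Num.Theory.
Import numFieldNormedType.Exports.
Local Open Scope ring_scope.

Section FiniteSums.
Context {R : realFieldType}.

Lemma cauchy_schwarz (I : finType) (a b : I -> R) :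
  (\sum_i a i * b i) ^+ 2 <= (\sum_i a i ^+ 2) * (\sum_i b i ^+ 2).
Proof.
have lagrange : 0 <= \sum_i \sum_j (a i * b j - a j * b i) ^+ 2.
  by apply: sumr_ge0 => i _; apply: sumr_ge0 => j _; apply: sqr_ge0.
have expand i j : (a i * b j - a j * b i) ^+ 2 =
    a i ^+ 2 * b j ^+ 2 + a j ^+ 2 * b i ^+ 2 - 2 * ((a i * b i) * (a j * b j)).
  by ring.
have prodE : \sum_i \sum_j a i ^+ 2 * b j ^+ 2 = (\sum_i a i ^+ 2) * (\sum_i b i ^+ 2).
  by rewrite mulr_suml; apply: eq_bigr => i _; rewrite mulr_sumr.
have sqrE : \sum_i \sum_j (a i * b i) * (a j * b j) = (\sum_i a i * b i) ^+ 2.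
  by rewrite expr2 mulr_suml; apply: eq_bigr => i _; rewrite mulr_sumr.
rewrite (eq_bigr (fun i => \sum_j a i ^+ 2 * b j ^+ 2 + \sum_j a j ^+ 2 * b i ^+ 2
    - 2 * \sum_j (a i * b i) * (a j * b j))) in lagrange; last first.
  by move=> i _; rewrite (eq_bigr _ (fun j _ => expand i j)) sumrB big_split mulr_sumr.
rewrite sumrB big_split /= -mulr_sumr prodE exchange_big prodE sqrE in lagrange.
lra.
Qed.

Lemma norm_avg_le (T : finType) (mu : T -> R) (g : T -> R) (G : R) :
  (forall x, 0 <= mu x) -> \sum_x mu x = 1 ->
  (forall x, `|g x| <= G) -> `|\sum_x mu x * g x| <= G.
Proof.
move=> mu0 mu1 gG; apply: le_trans (ler_norm_sum _ _ _) _.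
apply: le_trans (_ : \sum_x mu x * G <= G).
  by apply: ler_sum => x _; rewrite normrM ger0_norm // ler_wpM2l.
by rewrite -mulr_suml mu1 mul1r.
Qed.

End FiniteSums.

Section InfiniteSums.
Context {R : realType}.
Implicit Types u v : nat -> R.

Lemma infsumE u : infsum u = limn (series u).
Proof. by []. Qed.

Lemma eq_infsum [u v] : u =1 v -> infsum u = infsum v.
Proof. by move=> /funext ->. Qed.

Lemma infsumD [u v] : cvgn (series u) -> cvgn (series v) ->
  infsum (fun t => u t + v t) = infsum u + infsum v.
Proof. by move=> hu hv; apply: (lim_seriesD hu hv). Qed.

Lemma infsumB [u v] : cvgn (series u) -> cvgn (series v) ->
  infsum (fun t => u t - v t) = infsum u - infsum v.
Proof. by move=> hu hv; apply: (lim_seriesB hu hv). Qed.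

Lemma series_scale c u : series (fun t => c * u t) = series (c *: u).
Proof. by apply/funext => n; rewrite /series /=; apply: eq_bigr. Qed.

Lemma cvg_seriesZ c [u] : cvgn (series u) -> cvgn (series (fun t => c * u t)).
Proof. by rewrite series_scale; exact: is_cvg_seriesZ. Qed.

Lemma infsumZ c [u] : cvgn (series u) -> infsum (fun t => c * u t) = c * infsum u.
Proof. by move=> hu; rewrite infsumE series_scale; exact: lim_seriesZ. Qed.

Lemma cvg_series_sum_infsum (I : Type) (r : seq I) (F : I -> nat -> R) :
  (forall i, cvgn (series (F i))) ->
  cvgn (series (fun t => \sum_(i <- r) F i t)) /\
  infsum (fun t => \sum_(i <- r) F i t) = \sum_(i <- r) infsum (F i).
Proof.
move=> hF; elim: r => [|i r [cvg_r sum_r]].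
  have series0 : series (fun t => \sum_(i <- [::]) F i t) = fun=> 0.
    by apply/funext => n; rewrite /series /= big1 // => t _; rewrite big_nil.
  split; first by rewrite series0; exact: is_cvg_cst.
  by rewrite infsumE series0 lim_cst ?big_nil.
under eq_fun do rewrite big_cons.
by rewrite big_cons -sum_r; split; [apply: is_cvg_seriesD | apply: infsumD].
Qed.

Lemma cvg_series_sum (I : finType) (F : I -> nat -> R) :
  (forall i, cvgn (series (F i))) -> cvgn (series (fun t => \sum_i F i t)).
Proof. by move=> /(@cvg_series_sum_infsum I (index_enum I)) []. Qed.

Lemma infsum_sum (I : finType) (F : I -> nat -> R) :
  (forall i, cvgn (series (F i))) -> infsum (fun t => \sum_i F i t) = \sum_i infsum (F i).
Proof. by move=> /(@cvg_series_sum_infsum I (index_enum I)) []. Qed.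

Lemma seriesS_shift u : series (fun t => u t.+1) = (fun n => series u n.+1 - u 0%N).
Proof.
by apply/funext => n; rewrite /series /= big_nat_recl //= addrAC subrr add0r.
Qed.

Lemma cvg_series_shift [u] : cvgn (series u) -> cvgn (series (fun t => u t.+1)).
Proof.
move=> hu; rewrite seriesS_shift; apply: is_cvgB; last exact: is_cvg_cst.
by apply/cvg_ex; exists (limn (series u)); rewrite (cvg_shiftS (series u)).
Qed.

Lemma infsum_shift [u] : cvgn (series u) -> infsum u = u 0%N + infsum (fun t => u t.+1).
Proof.
move=> hu; suff -> : infsum (fun t => u t.+1) = infsum u - u 0%N by rewrite addrC subrK.
rewrite !infsumE seriesS_shift; apply: cvg_lim => //; apply: cvgB; last exact: cvg_cst.
by rewrite (cvg_shiftS (series u)).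
Qed.

Lemma infsum_ge0 [u] : cvgn (series u) -> (forall t, 0 <= u t) -> 0 <= infsum u.
Proof.
move=> hu u0; rewrite infsumE; apply: limr_ge => //.
by near=> n; rewrite /series /= sumr_ge0.
Unshelve. all: by end_near.
Qed.

Lemma cvg_series_discounted (g G : R) (x : nat -> R) : 0 <= g < 1 ->
  (forall t, `|x t| <= G) -> cvgn (series (fun t => g ^+ t * x t)).
Proof.
move=> /andP[g0 g1] xG; apply: normed_cvg.
have G0 : 0 <= G by apply: le_trans (xG 0%N).
apply: (series_le_cvg (v_ := geometric G g)).
- by move=> n; rewrite normr_ge0.
- by move=> n; rewrite /geometric /= mulr_ge0 // exprn_ge0.
- move=> n; rewrite /geometric /= normrM ger0_norm ?exprn_ge0 // mulrC.
  by rewrite ler_wpM2r ?exprn_ge0.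
- by apply: is_cvg_geometric_series; rewrite ger0_norm.
Qed.

End InfiniteSums.

Section KullbackLeibler.
Context {R : realType}.

Lemma KLE (T : finType) (p q : T -> R) : KL p q = \sum_x p x * ln (p x / q x).
Proof.
rewrite /KL big_mkcond; apply: eq_bigr => x _.
by case: eqP => [->|]; rewrite ?mul0r.
Qed.

Lemma KL_term_ge (p q : R) : 0 <= p -> 0 <= q -> (q = 0 -> p = 0) ->
  2 * p - 2 * (Num.sqrt p * Num.sqrt q) <= p * ln (p / q).
Proof.
move=> p0 q0 pq.
have [->|pn0] := eqVneq p 0; first by rewrite sqrtr0 !mul0r mulr0 subr0.
have pp : 0 < p by rewrite lt_def pn0.
have qp : 0 < q by rewrite lt_def q0 andbT; apply: contra_neq pn0 => /pq.
set sp := Num.sqrt p; set sq := Num.sqrt q.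
have spp : 0 < sp by rewrite sqrtr_gt0.
have sqp : 0 < sq by rewrite sqrtr_gt0.
have pE : p = sp ^+ 2 by rewrite sqr_sqrtr.
have qE : q = sq ^+ 2 by rewrite sqr_sqrtr.
have lnE : ln (p / q) = - (ln (sq / sp) *+ 2).
  rewrite pE qE -expr_div_n lnXn ?divr_gt0 //.
  by rewrite -(invf_div sq sp) lnV ?mulNrn // posrE divr_gt0.
have ln_le : ln (sq / sp) <= sq / sp - 1.
  have := @le_ln1Dx R (sq / sp - 1); rewrite [1 + _]addrC subrK; apply.
  by rewrite ltrBrDl subrr divr_gt0.
have pyE : p * (sq / sp) = sp * sq.
  by rewrite pE expr2 mulrC mulrA mulfVK ?gt_eqF // mulrC.
have := ler_wpM2l p0 ln_le; rewrite mulrBr pyE mulr1 lnE mulrN mulrnAr; lra.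
Qed.

Variable T : finType.
Variables p q : T -> R.
Hypothesis p_dist : is_dist p.
Hypothesis q_dist : is_dist q.
Hypothesis q_dominates_p : forall x, q x = 0 -> p x = 0.

Let sp x := Num.sqrt (p x).
Let sq x := Num.sqrt (q x).
Let bhatt := \sum_x sp x * sq x.

Lemma sum_sqrt_subr_sqr : \sum_x (sp x - sq x) ^+ 2 = 2 - 2 * bhatt.
Proof.
case: p_dist => p0 p1; case: q_dist => q0 q1.
have e x : (sp x - sq x) ^+ 2 = p x + q x - 2 * (sp x * sq x).
  by rewrite sqrrB !sqr_sqrtr // mulr2n mulrA; lra.
by under eq_bigr do rewrite e; rewrite sumrB big_split /= p1 q1 -mulr_sumr.
Qed.

Lemma sum_sqrt_addr_sqr : \sum_x (sp x + sq x) ^+ 2 = 2 + 2 * bhatt.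
Proof.
case: p_dist => p0 p1; case: q_dist => q0 q1.
have e x : (sp x + sq x) ^+ 2 = p x + q x + 2 * (sp x * sq x).
  by rewrite sqrrD !sqr_sqrtr // mulr2n mulrA; lra.
by under eq_bigr do rewrite e; rewrite !big_split /= p1 q1 -mulr_sumr.
Qed.

Lemma bhattacharyya_le_KL : 2 - 2 * bhatt <= KL p q.
Proof.
case: p_dist => p0 p1; case: q_dist => q0 q1.
have -> : 2 - 2 * bhatt = \sum_x (2 * p x - 2 * (sp x * sq x)).
  by rewrite sumrB -!mulr_sumr p1 mulr1.
rewrite KLE; apply: ler_sum => x _.
by apply: KL_term_ge; [exact: p0 | exact: q0 | exact: q_dominates_p].
Qed.

(* [|p - q| = |sp - sq| (sp + sq)], then Cauchy-Schwarz. *)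
Lemma l1_sqr_le_KL : (\sum_x `|p x - q x|) ^+ 2 <= 4 * KL p q.
Proof.
case: p_dist => p0 p1; case: q_dist => q0 q1.
have e x : `|p x - q x| = `|sp x - sq x| * (sp x + sq x).
  rewrite -[sp x + sq x]ger0_norm ?addr_ge0 ?sqrtr_ge0 // -normrM.
  by rewrite -subr_sqr !sqr_sqrtr.
under eq_bigr do rewrite e.
apply: le_trans (@cauchy_schwarz R T _ _) _.
under eq_bigr do rewrite real_normK ?num_real //.
have hel0 : 0 <= \sum_x (sp x - sq x) ^+ 2 by apply: sumr_ge0 => x _; apply: sqr_ge0.
have bhatt0 : 0 <= bhatt by apply: sumr_ge0 => x _; rewrite mulr_ge0 ?sqrtr_ge0.
have := bhattacharyya_le_KL.
rewrite sum_sqrt_subr_sqr in hel0 *; rewrite sum_sqrt_addr_sqr; nra.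
Qed.

End KullbackLeibler.

Lemma ln_prod (R : realType) (I : Type) (r : seq I) (F : I -> R) :
  (forall i, 0 < F i) -> ln (\prod_(i <- r) F i) = \sum_(i <- r) ln (F i).
Proof.
move=> F0; elim: r => [|i r ih]; first by rewrite !big_nil ln1.
by rewrite !big_cons lnM ?ih // posrE // prodr_gt0.
Qed.

Section ProductDistributions.
Variables (R : realType) (N : nat) (Act : 'I_N -> finType).
Local Notation jA := (@jact N Act).

Lemma sum_prod_jact (F : forall j : 'I_N, Act j -> R) :
  \sum_(a : jA) \prod_(j < N) F j (a j) = \prod_(j < N) \sum_(x : Act j) F j x.
Proof.
pose F_ j := [ffun x : Act j => F j x].
transitivity (\prod_(j < N) \sum_(x : Act j) F_ j x); last first.
  by apply: eq_bigr => j _; apply: eq_bigr => x _; rewrite ffunE.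
under [RHS]eq_bigr do rewrite (big_tag F_).
rewrite bigA_distr_big_dep -big_fprod.
rewrite (reindex (@dffun_of_fprod 'I_N Act)); last first.
  exists (@fprod_of_dffun 'I_N Act) => x _.
    exact: dffun_of_fprodK.
  exact: fprod_of_dffunK.
by apply: eq_bigr => a _; apply: eq_bigr => j _; rewrite /F_ !ffunE.
Qed.

Variables p q : forall j : 'I_N, Act j -> R.
Hypothesis p_dist : forall j, is_dist (p j).
Hypothesis q_dist : forall j, is_dist (q j).
Hypothesis q_dominates_p : forall j x, q j x = 0 -> p j x = 0.

Let pp (a : jA) := \prod_(j < N) p j (a j).
Let qq (a : jA) := \prod_(j < N) q j (a j).

Lemma prod_dist : is_dist pp.
Proof.
split; first by move=> a; apply: prodr_ge0 => j _; case: (p_dist j).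
by rewrite sum_prod_jact big1 // => j _; case: (p_dist j).
Qed.

Lemma prod_dominates (a : jA) : qq a = 0 -> pp a = 0.
Proof.
move=> /eqP /prodf_eq0 [j _ /eqP /q_dominates_p pj0].
by rewrite /pp (bigD1 j) //= pj0 mul0r.
Qed.

Lemma KL_prod : KL pp qq = \sum_(j < N) KL (p j) (q j).
Proof.
pose h j x := ln (p j x / q j x).
have pp_pos a : pp a != 0 -> forall j, 0 < p j (a j) /\ 0 < q j (a j).
  move=> ppa0 j; have pja0 : p j (a j) != 0.
    by apply: contra_neq ppa0 => pja0; rewrite /pp (bigD1 j) //= pja0 mul0r.
  split; rewrite lt_def; first by rewrite pja0; case: (p_dist j) => ->.
  by rewrite (contra_neq (@q_dominates_p j _)) //; case: (q_dist j) => ->.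
rewrite KLE.
transitivity (\sum_(a : jA) \sum_(j < N) pp a * h j (a j)).
  apply: eq_bigr => a _; rewrite -mulr_sumr.
  have [->|ppa0] := eqVneq (pp a) 0; first by rewrite !mul0r.
  congr (_ * _); rewrite /pp /qq -prodf_div ln_prod // => j.
  by have [pj qj] := pp_pos a ppa0 j; rewrite divr_gt0.
rewrite exchange_big /=; apply: eq_bigr => j _; rewrite KLE.
(* [pp a * h j (a j)] factorizes over coordinates; all factors but the j-th sum to 1. *)
pose G k x := p k x * (if k == j then h k x else 1).
transitivity (\sum_(a : jA) \prod_(k < N) G k (a k)).
  apply: eq_bigr => a _; rewrite /G big_split /= [X in _ = _ * X](bigD1 j) //= eqxx.
  by rewrite [X in _ = _ * (_ * X)]big1 ?mulr1 // => k /negbTE ->.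
rewrite sum_prod_jact (bigD1 j) //= [X in _ * X]big1 ?mulr1.
  by apply: eq_bigr => x _; rewrite /G eqxx.
move=> k /negbTE kj; rewrite /G; under eq_bigr do rewrite kj mulr1.
by case: (p_dist k).
Qed.

End ProductDistributions.

Section ProductPolicies.
Context {R : realType} {N : nat} {S : finType} {Act : 'I_N -> finType}.

Lemma prod_pol_dist [p : forall j : 'I_N, S -> Act j -> R] :
  (forall j s, is_dist (p j s)) -> forall s, is_dist (prod_pol p s).
Proof. by move=> p_dist s; exact: (@prod_dist R N Act (fun j => p j s)). Qed.

Lemma prod_pol_l1_sqr_le_KLmax [p q : forall j : 'I_N, S -> Act j -> R] :
  (forall j s, is_dist (p j s)) -> (forall j s, is_dist (q j s)) ->
  (forall j s x, q j s x = 0 -> p j s x = 0) ->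
  forall s, (\sum_a `|prod_pol q s a - prod_pol p s a|) ^+ 2
            <= 4 * \sum_(j < N) KLmax (p j) (q j).
Proof.
move=> p_dist q_dist qp s.
have := @l1_sqr_le_KL R _ _ _ (prod_pol_dist p_dist s) (prod_pol_dist q_dist s)
  (@prod_dominates R N Act (fun j => p j s) (fun j => q j s) (fun j => qp j s)).
under eq_bigr do rewrite distrC.
move/le_trans; apply.
rewrite (@KL_prod R N Act (fun j => p j s) (fun j => q j s)) //; last first.
  by move=> j; apply: qp.
rewrite ler_wpM2l // ler_sum // => j _.
exact: (le_bigmax _ (fun s => KL (p j s) (q j s))).
Qed.
End ProductPolicies.

Section MaxStateAction.
Context {R : realType} {N : nat} {S : finType} {Act : 'I_N -> finType}.

Lemma le_maxSA (F : S -> @jact N Act -> R) s a : F s a <= maxSA F.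
Proof. exact: (le_bigmax _ (fun p : S * _ => F p.1 p.2) (s, a)). Qed.

Lemma maxSA_ge0 (F : S -> @jact N Act -> R) : 0 <= maxSA F.
Proof. exact: bigmax_ge_id. Qed.

(* Pointwise AM-GM: [w (p - p') M >= - max|M| (w^2 + (p' - p)^2) / 2]. *)
Lemma weighted_policy_gap_ge (w : S -> R) (p p' M : S -> @jact N Act -> R) :
  - (2^-1 * maxSA (fun s a => `|M s a|)
       * (#|{: @jact N Act}|%:R * \sum_s w s ^+ 2 + \sum_s \sum_a (p' s a - p s a) ^+ 2))
  <= \sum_s w s * \sum_a p s a * M s a - \sum_s w s * \sum_a p' s a * M s a.
Proof.
set m := maxSA _; have m0 : 0 <= m by apply: maxSA_ge0.
have amgm s a : - (2^-1 * m * (w s ^+ 2 + (p' s a - p s a) ^+ 2))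
                <= w s * ((p s a - p' s a) * M s a).
  have Mm : `|M s a| <= m by exact: (le_maxSA (fun s a => `|M s a|)).
  set x := w s; set y := p s a - p' s a.
  have -> : (p' s a - p s a) ^+ 2 = y ^+ 2 by rewrite -sqrrN opprB.
  have xy2 : `|x * y| * 2 <= x ^+ 2 + y ^+ 2.
    rewrite normrM -(real_normK (num_real x)) -(real_normK (num_real y)).
    have := sqr_ge0 (`|x| - `|y|); rewrite sqrrB; lra.
  have : `|x * (y * M s a)| <= 2^-1 * m * (x ^+ 2 + y ^+ 2).
    rewrite mulrA normrM; apply: le_trans (ler_wpM2l (normr_ge0 _) Mm) _.
    have := ler_wpM2l m0 xy2; rewrite mulrCA; lra.
  by rewrite ler_norml => /andP[].
have -> : 2^-1 * m * (#|{: @jact N Act}|%:R * \sum_s w s ^+ 2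
                       + \sum_s \sum_a (p' s a - p s a) ^+ 2)
          = \sum_s \sum_a 2^-1 * m * (w s ^+ 2 + (p' s a - p s a) ^+ 2).
  rewrite mulrDr !mulr_sumr -big_split /=; apply: eq_bigr => s _.
  under [RHS]eq_bigr do rewrite mulrDr.
  by rewrite mulr_sumr big_split /= sumr_const mulrCA mulr_natl.
rewrite -sumrB -sumrN ler_sum // => s _; rewrite -mulrBr -sumrB mulr_sumr -sumrN.
by apply: ler_sum => a _; rewrite -mulrBl.
Qed.

End MaxStateAction.

Section Delta.
Context {R : realType} {S : finType}.

Lemma delta_dist s : is_dist (@delta R S s).
Proof.
split; first by move=> x; rewrite /delta; case: eqP.
by rewrite (bigD1 s) //= /delta eqxx big1 ?addr0 // => x /negbTE ->.
Qed.

Lemma sum_deltaMl s (F : S -> R) : \sum_x delta s x * F x = F s.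
Proof.
rewrite (bigD1 s) //= /delta eqxx mul1r big1 ?addr0 // => x /negbTE ->.
by rewrite mul0r.
Qed.

Lemma sum_mulr_delta (mu : S -> R) y : \sum_x mu x * delta x y = mu y.
Proof.
rewrite (bigD1 y) //= /delta eqxx mulr1 big1 ?addr0 // => x.
by rewrite eq_sym => /negbTE ->; rewrite mulr0.
Qed.

End Delta.

Section MarkovGame.
Variables (R : realType) (N : nat) (S : finType) (Act : 'I_N -> finType).
Local Notation jA := (@jact N Act).
Variables (P : S -> jA -> S -> R) (Rw : 'I_N -> S -> jA -> R) (gamma : R) (d0 : S -> R).
Hypothesis gamma01 : 0 <= gamma < 1.
Hypothesis P_dist : forall s a, is_dist (P s a).
Hypothesis d0_dist : is_dist d0.

Local Notation st := (stdist P).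
Local Notation rew := (exp_rew Rw).
Local Notation V := (Vfun P Rw gamma).
Local Notation Q := (Qfun P Rw gamma).
Local Notation A := (Afun P Rw gamma).
Local Notation dv := (dvis P gamma d0).

Definition is_policy (pi : S -> jA -> R) := forall s, is_dist (pi s).

Definition trans_pol (pi : S -> jA -> R) s s' := \sum_a pi s a * P s a s'.

Lemma stdistS pi mu t s' : st pi mu t.+1 s' = \sum_s st pi mu t s * trans_pol pi s s'.
Proof. by []. Qed.

Lemma trans_pol_dist [pi] : is_policy pi -> forall s, is_dist (trans_pol pi s).
Proof.
move=> pi_dist s; split.
  move=> s'; apply: sumr_ge0 => a _.
  by apply: mulr_ge0; [case: (pi_dist s) | case: (P_dist s a)].
rewrite /trans_pol exchange_big /=; under eq_bigr do rewrite -mulr_sumr.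
by rewrite -(pi_dist s).2; apply: eq_bigr => a _; rewrite (P_dist s a).2 mulr1.
Qed.

Lemma stdist_dist [pi mu] t : is_policy pi -> is_dist mu -> is_dist (st pi mu t).
Proof.
move=> pi_dist mu_dist; elim: t => [//|t [st0 st1]]; split.
  move=> s'; rewrite stdistS; apply: sumr_ge0 => s _; apply: mulr_ge0 => //.
  by case: (trans_pol_dist pi_dist s).
under eq_bigr do rewrite stdistS.
rewrite exchange_big /= -st1; apply: eq_bigr => s _.
by rewrite -mulr_sumr (trans_pol_dist pi_dist s).2 mulr1.
Qed.

Lemma stdist_mix pi (K : finType) (c : K -> R) (nu : K -> S -> R) t s' :
  st pi (fun y => \sum_k c k * nu k y) t s' = \sum_k c k * st pi (nu k) t s'.
Proof.
elim: t s' => [//|t ih] s'.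
rewrite stdistS; under eq_bigr do rewrite ih mulr_suml.
rewrite exchange_big /=; apply: eq_bigr => k _; rewrite mulr_sumr.
by apply: eq_bigr => s _; rewrite mulrA.
Qed.

Lemma stdistSl pi mu t :
  st pi mu t.+1 = st pi (fun s' => \sum_s mu s * trans_pol pi s s') t.
Proof. by elim: t => [//|t ih]; apply/funext => s'; rewrite stdistS ih. Qed.

Lemma exp_rew_mix pi i (K : finType) (c : K -> R) (nu : K -> S -> R) :
  rew pi i (fun y => \sum_k c k * nu k y) = \sum_k c k * rew pi i (nu k).
Proof.
rewrite /exp_rew; under eq_bigr do rewrite mulr_suml.
rewrite exchange_big /=; apply: eq_bigr => k _; rewrite mulr_sumr.
by apply: eq_bigr => s _; rewrite mulrA.
Qed.

Lemma exp_rew_stdist pi i mu t :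
  rew pi i (st pi mu t) = \sum_x mu x * rew pi i (st pi (delta x) t).
Proof.
have -> : st pi mu t = fun y => \sum_x mu x * st pi (delta x) t y.
  apply/funext => y; rewrite -stdist_mix; congr stdist.
  by apply/funext => z; rewrite sum_mulr_delta.
by rewrite exp_rew_mix.
Qed.

Lemma exp_rew_le pi i mu : is_policy pi -> is_dist mu ->
  `|rew pi i mu| <= maxSA (fun s a => `|Rw i s a|).
Proof.
move=> pi_dist [mu0 mu1]; apply: norm_avg_le => // s.
case: (pi_dist s) => pi0 pi1; apply: norm_avg_le => // a.
exact: (le_maxSA (fun s a => `|Rw i s a|)).
Qed.

Lemma cvg_series_exp_rew [pi] i [mu] : is_policy pi -> is_dist mu ->
  cvgn (series (fun t => gamma ^+ t * rew pi i (st pi mu t))).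
Proof.
move=> pi_dist mu_dist; apply: cvg_series_discounted => // t.
exact: exp_rew_le (stdist_dist _ _ _).
Qed.

Lemma cvg_series_stdist_avg [pi mu] g : is_policy pi -> is_dist mu ->
  cvgn (series (fun t => gamma ^+ t * \sum_s st pi mu t s * g s)).
Proof.
move=> pi_dist mu_dist; apply: (@cvg_series_discounted _ _ (\sum_s `|g s|)) => // t.
case: (stdist_dist t pi_dist mu_dist) => st0 st1; apply: norm_avg_le => // s.
by rewrite (bigD1 s) //= lerDl sumr_ge0.
Qed.

Lemma cvg_series_stdist [pi mu] s : is_policy pi -> is_dist mu ->
  cvgn (series (fun t => gamma ^+ t * st pi mu t s)).
Proof.
move=> pi_dist mu_dist; have := cvg_series_stdist_avg (delta^~ s) pi_dist mu_dist.
by congr (cvgn (series _)); apply/funext => t; rewrite sum_mulr_delta.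
Qed.

Lemma cvg_series_Qterm [pi] i s a : is_policy pi ->
  cvgn (series (fun t => gamma ^+ t * Qterm P Rw pi i s a t)).
Proof.
move=> pi_dist; apply: cvg_series_discounted => // -[|t] /=.
  exact: (le_maxSA (fun s a => `|Rw i s a|)).
exact: exp_rew_le (stdist_dist _ _ _).
Qed.

Lemma Vfun_Qfun pi i s : is_policy pi -> V pi i s = \sum_a pi s a * Q pi i s a.
Proof.
move=> pi_dist.
rewrite /Vfun (infsum_shift (cvg_series_exp_rew i pi_dist (delta_dist s))).
have rew0 : gamma ^+ 0 * rew pi i (st pi (delta s) 0) = \sum_a pi s a * Rw i s a.
  by rewrite expr0 mul1r /exp_rew /= sum_deltaMl.
have rewS t : gamma ^+ t.+1 * rew pi i (st pi (delta s) t.+1) =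
    \sum_a pi s a * (gamma ^+ t.+1 * Qterm P Rw pi i s a t.+1).
  rewrite stdistSl.
  have -> : (fun s' => \sum_x delta s x * trans_pol pi x s') = trans_pol pi s.
    by apply/funext => s'; rewrite sum_deltaMl.
  have -> : st pi (trans_pol pi s) t = fun y => \sum_a pi s a * st pi (P s a) t y.
    by apply/funext => y; rewrite -stdist_mix.
  by rewrite exp_rew_mix mulr_sumr; apply: eq_bigr => a _; rewrite mulrCA.
have cvgQS a := cvg_series_shift (cvg_series_Qterm i s a pi_dist).
rewrite rew0 (eq_infsum rewS) infsum_sum; last by move=> a; apply: cvg_seriesZ.
rewrite -big_split /=; apply: eq_bigr => a _.
rewrite infsumZ; last exact: cvgQS.
by rewrite /Qfun (infsum_shift (cvg_series_Qterm i s a pi_dist)) expr0 mul1r mulrDr.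
Qed.

Lemma Qfun_bellman pi i s a : is_policy pi ->
  Q pi i s a = Rw i s a + gamma * \sum_s' P s a s' * V pi i s'.
Proof.
move=> pi_dist.
have cvgV s' := cvg_series_exp_rew i pi_dist (delta_dist s').
rewrite /Qfun (infsum_shift (cvg_series_Qterm i s a pi_dist)) expr0 mul1r.
congr (_ + _).
rewrite (@eq_infsum _ _ (fun t => gamma * \sum_s' P s a s' *
    (gamma ^+ t * rew pi i (st pi (delta s') t)))); last first.
  move=> t /=; rewrite exp_rew_stdist exprS -mulrA; congr (_ * _).
  by rewrite mulr_sumr; apply: eq_bigr => s' _; rewrite mulrCA.
rewrite infsumZ; last by apply: cvg_series_sum => s'; apply: cvg_seriesZ.
rewrite infsum_sum; last by move=> s'; apply: cvg_seriesZ.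
by congr (_ * _); apply: eq_bigr => s' _; rewrite infsumZ.
Qed.

Lemma Afun_avg0 pi i s : is_policy pi -> \sum_a pi s a * A pi i s a = 0.
Proof.
move=> pi_dist; rewrite /Afun; under eq_bigr do rewrite mulrBr.
by rewrite sumrB -Vfun_Qfun // -mulr_suml (pi_dist s).2 mul1r subrr.
Qed.

Lemma return_Vfun pi i : is_policy pi ->
  infsum (fun t => gamma ^+ t * rew pi i (st pi d0 t)) = \sum_s d0 s * V pi i s.
Proof.
move=> pi_dist.
have cvgV s := cvg_series_exp_rew i pi_dist (delta_dist s).
rewrite (@eq_infsum _ _ (fun t => \sum_s d0 s *
    (gamma ^+ t * rew pi i (st pi (delta s) t)))); last first.
  by move=> t; rewrite exp_rew_stdist mulr_sumr; apply: eq_bigr => s _; rewrite mulrCA.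
rewrite infsum_sum; last by move=> s; apply: cvg_seriesZ.
by apply: eq_bigr => s _; rewrite infsumZ.
Qed.

Lemma dvis_avg pi g : is_policy pi ->
  \sum_s dv pi s * g s = infsum (fun t => gamma ^+ t * \sum_s st pi d0 t s * g s).
Proof.
move=> pi_dist.
have cvgd s := cvg_series_stdist s pi_dist d0_dist.
rewrite (@eq_infsum _ _ (fun t => \sum_s g s * (gamma ^+ t * st pi d0 t s))); last first.
  by move=> t; rewrite mulr_sumr; apply: eq_bigr => s _; rewrite mulrA mulrC.
rewrite infsum_sum; last by move=> s; apply: cvg_seriesZ.
by apply: eq_bigr => s _; rewrite infsumZ // mulrC.
Qed.

Lemma dvis_bellman [pi] s' : is_policy pi ->
  dv pi s' = d0 s' + gamma * \sum_s dv pi s * trans_pol pi s s'.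
Proof.
move=> pi_dist.
rewrite {1}/dvis (infsum_shift (cvg_series_stdist s' pi_dist d0_dist)) expr0 mul1r.
congr (_ + _); rewrite dvis_avg // -infsumZ; last exact: cvg_series_stdist_avg.
by apply: eq_infsum => t; rewrite exprS -mulrA.
Qed.

Lemma dvis_ge0 [pi] s : is_policy pi -> 0 <= dv pi s.
Proof.
move=> pi_dist; apply: infsum_ge0; first exact: cvg_series_stdist.
move=> t; apply: mulr_ge0; first by rewrite exprn_ge0 //; case/andP: gamma01.
by case: (stdist_dist t pi_dist d0_dist).
Qed.

Lemma dvis_mass [pi] : is_policy pi -> (1 - gamma) * \sum_s dv pi s = 1.
Proof.
move=> pi_dist.
suff e : \sum_s dv pi s = 1 + gamma * \sum_s dv pi s by rewrite mulrBl mul1r {1}e addrK.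
rewrite {1}(eq_bigr _ (fun s' _ => dvis_bellman s' pi_dist)).
rewrite big_split /= d0_dist.2 -mulr_sumr exchange_big /=.
congr (1 + gamma * _); apply: eq_bigr => s _.
by rewrite -mulr_sumr (trans_pol_dist pi_dist s).2 mulr1.
Qed.

Lemma avg_Afun_bellman po pn i s : is_policy po -> is_policy pn ->
  \sum_a pn s a * A po i s a =
  \sum_a pn s a * Rw i s a + gamma * \sum_s' trans_pol pn s s' * V po i s' - V po i s.
Proof.
move=> po_dist pn_dist; rewrite /Afun.
under eq_bigr do rewrite Qfun_bellman // mulrBr mulrDr mulrCA.
rewrite sumrB big_split /= -mulr_sumr -mulr_suml (pn_dist s).2 mul1r.
congr (_ + gamma * _ - _); rewrite /trans_pol.
under [RHS]eq_bigr do rewrite mulr_suml; rewrite exchange_big /=.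
by apply: eq_bigr => a _; rewrite mulr_sumr; apply: eq_bigr => s' _; rewrite mulrA.
Qed.

(* Telescoping [W t = E_{s ~ st pn d0 t} V po s] against the Bellman identity above. *)
Lemma performance_difference po pn i : is_policy po -> is_policy pn ->
  infsum (fun t => gamma ^+ t * rew pn i (st pn d0 t)) - \sum_s d0 s * V po i s
  = \sum_s dv pn s * \sum_a pn s a * A po i s a.
Proof.
move=> po_dist pn_dist.
pose W t := \sum_s st pn d0 t s * V po i s.
have WS t : W t.+1 = \sum_s st pn d0 t s * \sum_s' trans_pol pn s s' * V po i s'.
  rewrite /W; under eq_bigr do rewrite stdistS mulr_suml.
  rewrite exchange_big /=; apply: eq_bigr => s _; rewrite mulr_sumr.
  by apply: eq_bigr => s' _; rewrite mulrA.
have step t :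
    gamma ^+ t * \sum_s st pn d0 t s * \sum_a pn s a * A po i s a
    = gamma ^+ t * rew pn i (st pn d0 t) + (gamma ^+ t.+1 * W t.+1 - gamma ^+ t * W t).
  under eq_bigr do rewrite avg_Afun_bellman //.
  rewrite WS /exp_rew /W exprS.
  under eq_bigr do rewrite mulrBr mulrDr [_ * (gamma * _)]mulrCA.
  by rewrite sumrB big_split /= -mulr_sumr; ring.
have cvgW : cvgn (series (fun t => gamma ^+ t * W t)) by apply: cvg_series_stdist_avg.
have cvgR := cvg_series_exp_rew i pn_dist d0_dist.
have cvgWS := cvg_series_shift cvgW.
have cvgWB := is_cvg_seriesB cvgWS cvgW.
rewrite dvis_avg // (eq_infsum step) infsumD // infsumB // (infsum_shift cvgW).
rewrite expr0 mul1r /W /=; lra.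
Qed.

Lemma eta_tot_diff po pn : is_policy po -> is_policy pn ->
  eta_tot P Rw gamma d0 pn - eta_tot P Rw gamma d0 po
  = \sum_s dv pn s * \sum_i \sum_a pn s a * A po i s a.
Proof.
move=> po_dist pn_dist; rewrite /eta_tot.
under [X in _ - X]eq_bigr do rewrite return_Vfun //.
rewrite -sumrB; under eq_bigr do rewrite performance_difference //.
by rewrite exchange_big /=; apply: eq_bigr => s _; rewrite mulr_sumr.
Qed.

Lemma trans_pol_l1_le po pn s :
  \sum_s' `|trans_pol pn s s' - trans_pol po s s'| <= \sum_a `|pn s a - po s a|.
Proof.
apply: le_trans (_ : \sum_s' \sum_a `|pn s a - po s a| * P s a s' <= _).
  apply: ler_sum => s' _; rewrite -sumrB.
  apply: le_trans (ler_norm_sum _ _ _) _; apply: ler_sum => a _.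
  by rewrite -mulrBl normrM (ger0_norm ((P_dist s a).1 s')).
rewrite exchange_big /=; apply: ler_sum => a _.
by rewrite -mulr_sumr (P_dist s a).2 mulr1.
Qed.

Lemma dvis_diff_bellman po pn s' : is_policy po -> is_policy pn ->
  dv pn s' - dv po s' = gamma * (\sum_s (dv pn s - dv po s) * trans_pol pn s s'
                                 + \sum_s dv po s * (trans_pol pn s s' - trans_pol po s s')).
Proof.
move=> po_dist pn_dist; rewrite (dvis_bellman s' pn_dist) (dvis_bellman s' po_dist).
rewrite opprD addrACA subrr add0r -mulrBr -sumrB -big_split; congr (_ * _).
by apply: eq_bigr => s _ /=; ring.
Qed.

(* With [x = sum |dv pn - dv po|], the identity above gives [x <= gamma (x + B / (1 - gamma))]. *)
Lemma dvis_l1_diff_le po pn B : is_policy po -> is_policy pn ->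
  (forall s, \sum_a `|pn s a - po s a| <= B) ->
  (1 - gamma) ^+ 2 * \sum_s `|dv pn s - dv po s| <= gamma * B.
Proof.
move=> po_dist pn_dist pB; case/andP: gamma01 => g0 g1.
have trans_n := trans_pol_dist pn_dist.
set x := \sum_s _; set m := \sum_s dv po s.
have x_le : x <= gamma * (x + B * m).
  apply: le_trans (_ : \sum_s' gamma * (\sum_s `|dv pn s - dv po s| * trans_pol pn s s'
       + \sum_s dv po s * `|trans_pol pn s s' - trans_pol po s s'|) <= _).
    apply: ler_sum => s' _; rewrite dvis_diff_bellman // normrM ger0_norm //.
    apply: ler_wpM2l => //; apply: le_trans (ler_normD _ _) _.
    apply: lerD; apply: le_trans (ler_norm_sum _ _ _) _; apply: ler_sum => s _.
      by rewrite normrM (ger0_norm ((trans_n s).1 s')).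
    by rewrite normrM (ger0_norm (dvis_ge0 s po_dist)).
  rewrite -mulr_sumr; apply: ler_wpM2l => //; rewrite big_split /=.
  apply: lerD; rewrite exchange_big /=.
    by apply: ler_sum => s _; rewrite -mulr_sumr (trans_n s).2 mulr1.
  rewrite mulr_sumr; apply: ler_sum => s _; rewrite -mulr_sumr mulrC.
  by rewrite ler_wpM2r ?dvis_ge0 // (le_trans (trans_pol_l1_le po pn s)).
have mass := dvis_mass po_dist; rewrite -/m in mass.
have x_le' : (1 - gamma) * x <= gamma * B * m.
  by rewrite mulrBl mul1r lerBlDl -mulrA -mulrDr.
have g1' : 0 <= 1 - gamma by rewrite subr_ge0 ltW.
have := ler_wpM2l g1' x_le'.
by rewrite mulrA -expr2 mulrCA mass mulr1.
Qed.

Lemma adv_gain_le po pn s : is_policy po ->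
  `|\sum_i \sum_a pn s a * A po i s a|
    <= maxSA (fun s a => `|\sum_i A po i s a|) * \sum_a `|pn s a - po s a|.
Proof.
move=> po_dist.
have -> : \sum_i \sum_a pn s a * A po i s a = \sum_a (pn s a - po s a) * \sum_i A po i s a.
  transitivity (\sum_i \sum_a (pn s a - po s a) * A po i s a).
    apply: eq_bigr => i _; under [RHS]eq_bigr do rewrite mulrBl.
    by rewrite sumrB Afun_avg0 // subr0.
  by rewrite exchange_big; apply: eq_bigr => a _; rewrite mulr_sumr.
apply: le_trans (ler_norm_sum _ _ _) _; rewrite mulr_sumr ler_sum // => a _.
rewrite normrM mulrC ler_wpM2r //.
exact: (le_maxSA (fun s a => `|\sum_i A po i s a|)).
Qed.

Lemma visitation_shift_ge po pn D : is_policy po -> is_policy pn -> 0 <= D ->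
  (forall s, (\sum_a `|pn s a - po s a|) ^+ 2 <= D) ->
  - (maxSA (fun s a => `|\sum_i A po i s a|) * gamma * D / (1 - gamma) ^+ 2)
    <= \sum_s (dv pn s - dv po s) * \sum_i \sum_a pn s a * A po i s a.
Proof.
move=> po_dist pn_dist D0 pD; case/andP: gamma01 => g0 g1.
set eps := maxSA _; have eps0 : 0 <= eps by apply: maxSA_ge0.
set B := Num.sqrt D; have B0 : 0 <= B by apply: sqrtr_ge0.
have pB s : \sum_a `|pn s a - po s a| <= B.
  by rewrite -[leLHS]ger0_norm ?sumr_ge0 // -sqrtr_sqr ler_wsqrtr.
have gain s : `|\sum_i \sum_a pn s a * A po i s a| <= eps * B.
  by apply: le_trans (adv_gain_le po pn s po_dist) _; rewrite ler_wpM2l.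
apply: le_trans (_ : - (\sum_s `|dv pn s - dv po s| * (eps * B)) <= _); last first.
  rewrite -sumrN; apply: ler_sum => s _.
  have := ler_wpM2l (normr_ge0 (dv pn s - dv po s)) (gain s).
  by rewrite -normrM ler_norml => /andP[].
rewrite lerN2 -mulr_suml.
have gp : 0 < (1 - gamma) ^+ 2 by rewrite exprn_gt0 // subr_gt0.
have dl1 : \sum_s `|dv pn s - dv po s| <= gamma * B / (1 - gamma) ^+ 2.
  by rewrite ler_pdivlMr // mulrC dvis_l1_diff_le.
apply: le_trans (ler_wpM2r (mulr_ge0 eps0 B0) dl1) _.
suff -> : eps * gamma * D / (1 - gamma) ^+ 2 = gamma * B / (1 - gamma) ^+ 2 * (eps * B) by [].
by rewrite -{1}(sqr_sqrtr D0) -/B; ring.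
Qed.

Lemma zeta_gap_ge po pn (Pit : 'I_N -> S -> jA -> R) :
  - (\sum_i (2^-1 * maxSA (fun s a => `|A po i s a|) * #|{: jA}|%:R * \sum_s dv po s ^+ 2)
     + \sum_i (2^-1 * maxSA (fun s a => `|A po i s a|)
                * \sum_s \sum_a (Pit i s a - pn s a) ^+ 2))
  <= \sum_i \sum_s dv po s * \sum_a pn s a * A po i s a - zeta_tot P Rw gamma d0 po Pit.
Proof.
rewrite /zeta_tot -sumrB -big_split -sumrN; apply: ler_sum => i _ /=.
by have := weighted_policy_gap_ge (dv po) pn (Pit i) (A po i); rewrite mulrDr mulrA.
Qed.

End MarkovGame.

Theorem theorem1 (R : realType) (N : nat) (S : finType) (Act : 'I_N -> finType)
  (P : S -> @jact N Act -> S -> R) (Rw : 'I_N -> S -> @jact N Act -> R)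
  (gamma : R) (d0 : S -> R)
  (piold pinew : forall j : 'I_N, S -> Act j -> R)
  (pisug : 'I_N -> forall j : 'I_N, S -> Act j -> R) :
  0 < gamma < 1 ->
  is_dist d0 ->
  (forall s a, is_dist (P s a)) ->
  (forall j s, is_dist (piold j s)) ->
  (forall j s, is_dist (pinew j s)) ->
  (forall i j s, is_dist (pisug i j s)) ->
  (forall i, pisug i i = pinew i) ->
  (* D_KL^max finite, i.e. pi^ii_old(.|s) << pi^ii_new(.|s); otherwise RHS = -oo *)
  (forall i s a, pinew i s a = 0 -> piold i s a = 0) ->
  let pio := prod_pol piold in
  let pin := prod_pol pinew in
  let Pit := fun i => prod_pol (pisug i) in
  let A := Afun P Rw gamma pio in
  let C := 4 * gamma * maxSA (fun s a => `|\sum_(i < N) A i s a|) / (1 - gamma) ^+ 2 in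
  let f := \sum_(i < N) (2^-1 * maxSA (fun s a => `|A i s a|) * #|{: @jact N Act}|%:R
                         * \sum_s (dvis P gamma d0 pio s) ^+ 2) in
  (eta_tot P Rw gamma d0 pin >=
    eta_tot P Rw gamma d0 pio + zeta_tot P Rw gamma d0 pio Pit
    - C * \sum_(i < N) KLmax (piold i) (pinew i)
    - f
    - \sum_(i < N) (2^-1 * maxSA (fun s a => `|A i s a|)
                     * \sum_s \sum_a (Pit i s a - pin s a) ^+ 2)).
Proof.
move=> /andP[g0 g1] d0_dist P_dist po_dist pn_dist _ _ pn_dom; cbv zeta.
set pio := prod_pol piold; set pin := prod_pol pinew; set A := Afun P Rw gamma pio.
have gamma01 : 0 <= gamma < 1 by rewrite ltW.
have pio_dist := prod_pol_dist po_dist; have pin_dist := prod_pol_dist pn_dist.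
set K := \sum_(i < N) _.
have K0 : 0 <= K by apply: sumr_ge0 => i _; exact: bigmax_ge_id.
have shift := @visitation_shift_ge _ _ _ _ _ Rw _ _ gamma01 P_dist d0_dist _ _ _
  pio_dist pin_dist (mulr_ge0 (ler0n _ 4) K0) (prod_pol_l1_sqr_le_KLmax po_dist pn_dist pn_dom).
have gap := @zeta_gap_ge _ _ _ _ P Rw gamma d0 pio pin (fun i => prod_pol (pisug i)).
have diff := @eta_tot_diff _ _ _ _ P Rw gamma d0 gamma01 P_dist d0_dist _ _ pio_dist pin_dist.
have split_dvis : \sum_s dvis P gamma d0 pin s * \sum_i \sum_a pin s a * A i s a
    = \sum_s (dvis P gamma d0 pin s - dvis P gamma d0 pio s) * \sum_i \sum_a pin s a * A i s a
      + \sum_i \sum_s dvis P gamma d0 pio s * \sum_a pin s a * A i s a.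
  rewrite [X in _ + X]exchange_big -big_split /=; apply: eq_bigr => s _.
  by rewrite -mulr_sumr -mulrDl subrK.
have CK : 4 * gamma * maxSA (fun s a => `|\sum_i A i s a|) / (1 - gamma) ^+ 2 * K
    = maxSA (fun s a => `|\sum_i A i s a|) * gamma * (4 * K) / (1 - gamma) ^+ 2 by ring.
move: shift gap diff; rewrite split_dvis -CK; lra.
Qed.
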